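(* Let $M_0$ be an r-oriented two-sided associative cone in $\mathbb{R}^7$, written as $M_0=\{r\phi(\sigma):\sigma\in\Sigma,r\in\mathbb{R}\}$ for a real analytic map $\phi:\Sigma\to S^6$ from a Riemann surface $\Sigma$ (with the complex structure induced by $\phi^*g$ and the orientation making $\varphi(\phi,\partial_s\phi,\partial_t\phi)>0$ for positive coordinates). Let $w$ be a holomorphic vector field on $\Sigma$ and set $\psi=\mathcal{L}_w\phi:\Sigma\to\mathbb{R}^7$, the Lie derivative of $\phi$ along $w$. Then $M=\{r\phi(\sigma)+\psi(\sigma):\sigma\in\Sigma,r\in\mathbb{R}\}$ is an r-oriented ruled associative 3-fold in $\mathbb{R}^7$ with asymptotic cone $M_0$.
   Context: Let $(x_1,\dots,x_7)$ be coordinates on $\mathbb{R}^7$ with Euclidean metric $g$, $dx_{ijk}=dx_i\wedge dx_j\wedge dx_k$, and $\varphi=dx_{123}+dx_{145}+dx_{167}+dx_{246}-dx_{257}-dx_{347}-dx_{356}$. An oriented 3-dimensional (immersed) submanifold $N$ is associative if $\varphi|_{T_xN}=\mathrm{vol}_{T_xN}$ for all $x\in N$. A cone is a submanifold invariant under dilations, nonsingular except possibly at $0$; it is two-sided if $C=-C$. An r-oriented ruled submanifold is one of the form $\{r\phi(\sigma)+\psi(\sigma):\sigma\in\Sigma,r\in\mathbb{R}\}$ with $\phi:\Sigma\to S^6$, $\psi:\Sigma\to\mathbb{R}^7$, viewed as the union of the affine lines through $\psi(\sigma)$ with oriented unit direction $\phi(\sigma)$; its asymptotic cone is $\{r\phi(\sigma):\sigma\in\Sigma,r\in\mathbb{R}\}$.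 An r-oriented two-sided cone is an r-oriented ruled submanifold with $\psi\equiv0$. *)

From Stdlib Require Import Reals Lra List.
From Coquelicot Require Import Coquelicot.
Open Scope R_scope.

(* Vectors of R^7: components x_1..x_7 are stored at indices 0..6. *)
Definition vec7 := nat -> R.

Definition dot7 (u v : vec7) : R :=
  u 0%nat * v 0%nat + u 1%nat * v 1%nat + u 2%nat * v 2%nat + u 3%nat * v 3%nat
  + u 4%nat * v 4%nat + u 5%nat * v 5%nat + u 6%nat * v 6%nat.

Definition norm7 (u : vec7) : R := sqrt (dot7 u u).

(* dx_i ∧ dx_j ∧ dx_k evaluated on (u,v,w), with 1-based coordinate indices *)
Definition dx3 (i j k : nat) (u v w : vec7) : R :=
  let a := fun (x : vec7) (n : nat) => x (n - 1)%nat in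
  a u i * (a v j * a w k - a v k * a w j)
  - a u j * (a v i * a w k - a v k * a w i)
  + a u k * (a v i * a w j - a v j * a w i).

Definition phi3 (u v w : vec7) : R :=
  dx3 1 2 3 u v w + dx3 1 4 5 u v w + dx3 1 6 7 u v w + dx3 2 4 6 u v w
  - dx3 2 5 7 u v w - dx3 3 4 7 u v w - dx3 3 5 6 u v w.

(* Gram determinant of three vectors: vol(u,v,w) = sqrt (gram3 u v w) *)
Definition gram3 (u v w : vec7) : R :=
  let a := dot7 u u in let b := dot7 u v in let c := dot7 u w in
  let d := dot7 v v in let e := dot7 v w in let f := dot7 w w in
  a * (d * f - e * e) - b * (b * f - e * c) + c * (b * e - d * c).

Definition d_s (f : C -> vec7) (z : C) : vec7 :=
  fun i => Derive (fun x => f (x, snd z) i) (fst z).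
Definition d_t (f : C -> vec7) (z : C) : vec7 :=
  fun i => Derive (fun y => f (fst z, y) i) (snd z).

Definition pd_r (F : R -> C -> vec7) (r : R) (z : C) : vec7 :=
  fun i => Derive (fun x => F x z i) r.
Definition pd_s (F : R -> C -> vec7) (r : R) (z : C) : vec7 :=
  fun i => Derive (fun x => F r (x, snd z) i) (fst z).
Definition pd_t (F : R -> C -> vec7) (r : R) (z : C) : vec7 :=
  fun i => Derive (fun y => F r (fst z, y) i) (snd z).

Definition immersion_at (F : R -> C -> vec7) (r : R) (z : C) : Prop :=
  (forall i, ex_derive (fun x => F x z i) r) /\
  (forall i, ex_derive (fun x => F r (x, snd z) i) (fst z)) /\
  (forall i, ex_derive (fun y => F r (fst z, y) i) (snd z)) /\
  gram3 (pd_r F r z) (pd_s F r z) (pd_t F r z) > 0.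

(* The immersed 3-fold parametrized by F on R x U, oriented by the
   parametrization (dr, ds, dt), is associative at all its nonsingular points:
   φ restricted to the tangent space equals the volume form, i.e.
   φ(F_r, F_s, F_t) = vol(F_r, F_s, F_t) = sqrt(Gram). *)
Definition associative_param (D : R -> C -> Prop) (F : R -> C -> vec7) : Prop :=
  forall r z, D r z -> immersion_at F r z ->
    phi3 (pd_r F r z) (pd_s F r z) (pd_t F r z)
    = sqrt (gram3 (pd_r F r z) (pd_s F r z) (pd_t F r z)).

(* Iterated partial derivatives of a real function of z = (s,t):
   true = d/ds, false = d/dt. *)
Fixpoint dpart (l : list bool) (g : C -> R) : C -> R :=
  match l with
  | nil => g
  | b :: l' => let h := dpart l' g in
      if b then (fun z => Derive (fun x => h (x, snd z)) (fst z))
      else (fun z => Derive (fun y => h (fst z, y)) (snd z))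
  end.

Definition smooth_on (U : C -> Prop) (g : C -> R) : Prop :=
  forall (l : list bool) (z : C), U z ->
    ex_derive (fun x => dpart l g (x, snd z)) (fst z) /\
    ex_derive (fun y => dpart l g (fst z, y)) (snd z) /\
    continuous (dpart l g) z.

Definition real_analytic_on (U : C -> Prop) (g : C -> R) : Prop :=
  forall z0 : C, U z0 -> exists (rho : R) (c : nat -> nat -> R),
    0 < rho /\
    (forall n, ex_series (fun m => Rabs (c n m) * rho ^ (n + m))) /\
    ex_series (fun n => Series (fun m => Rabs (c n m) * rho ^ (n + m))) /\
    forall z : C, Rabs (fst z - fst z0) < rho -> Rabs (snd z - snd z0) < rho ->
      g z = Series (fun n => Series (fun m =>
               c n m * (fst z - fst z0) ^ n * (snd z - snd z0) ^ m)).

Definition holomorphic_on (U : C -> Prop) (w : C -> C) : Prop :=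
  forall z, U z -> @ex_derive C_AbsRing C_NormedModule w z.

Definition ruled_set (U : C -> Prop) (phi psi : C -> vec7) (x : vec7) : Prop :=
  exists r z, U z /\ forall i, x i = r * phi z i + psi z i.
Definition asymptotic_cone (U : C -> Prop) (phi psi : C -> vec7) (x : vec7) : Prop :=
  exists r z, U z /\ forall i, x i = r * phi z i.
Definition cone_set (U : C -> Prop) (phi : C -> vec7) (x : vec7) : Prop :=
  exists r z, U z /\ forall i, x i = r * phi z i.

(* Lie derivative of phi along the real vector field w = a d/ds + b d/dt,
   where w = a + i b as a complex function *)
Definition lie_deriv (w : C -> C) (phi : C -> vec7) (z : C) : vec7 :=
  fun i => fst (w z) * d_s phi z i + snd (w z) * d_t phi z i.

From Stdlib Require Import Reals Lra Lia List.
From Coquelicot Require Import Coquelicot.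
Open Scope R_scope.

(* Write p = phi, e1 = d_s phi, e2 = d_t phi and let x be the octonionic cross product of R^7.
   In conformal coordinates, associativity of the cone at its unit link is the identity
   e2 = p x e1.  Differentiating it along s and t gives d_s e2 = p x d_s e1 and
   d_t e2 = p x d_t e1 - |e1|^2 p.  For w = a + i b, psi = a e1 + b e2 and F = r p + psi,
   the Cauchy-Riemann equations then turn these into F_t = p x F_s - b |e1|^2 p, while
   F_r = p.  A triple (p, v, p x v + mu p) with p a unit vector is calibrated by phi
   (both sides equal |p x v|^2), so F is associative at every immersed point. *)

(* The octonionic cross product of R^7, normalized so that [phi3 u v w = dot7 (cross u v) w]. *)
Definition cross (u v : vec7) : vec7 := fun k =>
  match k with
  | 0%nat => (u 1%nat * v 2%nat - u 2%nat * v 1%nat) + (u 3%nat * v 4%nat - u 4%nat * v 3%nat) + (u 5%nat * v 6%nat - u 6%nat * v 5%nat)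
  | 1%nat => (u 2%nat * v 0%nat - u 0%nat * v 2%nat) + (u 3%nat * v 5%nat - u 5%nat * v 3%nat) - (u 4%nat * v 6%nat - u 6%nat * v 4%nat)
  | 2%nat => (u 0%nat * v 1%nat - u 1%nat * v 0%nat) - (u 3%nat * v 6%nat - u 6%nat * v 3%nat) - (u 4%nat * v 5%nat - u 5%nat * v 4%nat)
  | 3%nat => (u 4%nat * v 0%nat - u 0%nat * v 4%nat) + (u 5%nat * v 1%nat - u 1%nat * v 5%nat) - (u 6%nat * v 2%nat - u 2%nat * v 6%nat)
  | 4%nat => (u 0%nat * v 3%nat - u 3%nat * v 0%nat) - (u 6%nat * v 1%nat - u 1%nat * v 6%nat) - (u 5%nat * v 2%nat - u 2%nat * v 5%nat)
  | 5%nat => (u 6%nat * v 0%nat - u 0%nat * v 6%nat) + (u 1%nat * v 3%nat - u 3%nat * v 1%nat) - (u 2%nat * v 4%nat - u 4%nat * v 2%nat)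
  | 6%nat => (u 0%nat * v 5%nat - u 5%nat * v 0%nat) - (u 1%nat * v 4%nat - u 4%nat * v 1%nat) - (u 2%nat * v 3%nat - u 3%nat * v 2%nat)
  | _ => 0
  end.

(* Vectors are functions on nat; only the coordinates 0..6 are meaningful. *)
Definition eq7 (u v : vec7) : Prop := forall i, (i < 7)%nat -> u i = v i.

Ltac coordinates k := destruct k as [|[|[|[|[|[|[|k]]]]]]].

Lemma phi3_cross u v w : phi3 u v w = dot7 (cross u v) w.
Proof. unfold phi3, dx3, dot7, cross; simpl. ring. Qed.

Lemma dot7_comm u v : dot7 u v = dot7 v u.
Proof. unfold dot7. ring. Qed.

Lemma dot7_ge0 u : 0 <= dot7 u u.
Proof. unfold dot7. nra. Qed.

Lemma dot7_self_eq0 u : dot7 u u = 0 -> eq7 u (fun _ => 0).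
Proof. unfold dot7. intros H i Hi. coordinates i; try lia; nra. Qed.

Lemma dot7_cross_cross u v :
  dot7 (cross u v) (cross u v) = dot7 u u * dot7 v v - dot7 u v * dot7 u v.
Proof. unfold dot7, cross. ring. Qed.

Lemma dot7_cross_l u v : dot7 (cross u v) u = 0.
Proof. unfold dot7, cross. ring. Qed.

Lemma dot7_cross_r u v : dot7 (cross u v) v = 0.
Proof. unfold dot7, cross. ring. Qed.

Lemma cross_same u k : cross u u k = 0.
Proof. coordinates k; simpl; ring. Qed.

Lemma cross_add_r u x y k : cross u (fun j => x j + y j) k = cross u x k + cross u y k.
Proof. coordinates k; simpl; ring. Qed.

Lemma cross_scale_r u c x k : cross u (fun j => c * x j) k = c * cross u x k.
Proof. coordinates k; simpl; ring. Qed.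

Lemma cross_cross_l u v : eq7 (cross u (cross u v)) (fun k => dot7 u v * u k - dot7 u u * v k).
Proof. unfold dot7. intros k Hk. coordinates k; try lia; simpl; ring. Qed.

Lemma cross_cross_r u v : eq7 (cross (cross u v) v) (fun k => dot7 u v * v k - dot7 v v * u k).
Proof. unfold dot7. intros k Hk. coordinates k; try lia; simpl; ring. Qed.

Lemma dot7_eq7 u u' v v' : eq7 u u' -> eq7 v v' -> dot7 u v = dot7 u' v'.
Proof. intros Hu Hv. unfold dot7. rewrite !Hu, !Hv by lia. reflexivity. Qed.

Lemma cross_eq7 u u' v v' k : eq7 u u' -> eq7 v v' -> cross u v k = cross u' v' k.
Proof. intros Hu Hv. coordinates k; simpl; rewrite ?Hu, ?Hv by lia; reflexivity. Qed.

Lemma phi3_eq7 u u' v v' w w' : eq7 u u' -> eq7 v v' -> eq7 w w' -> phi3 u v w = phi3 u' v' w'.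
Proof.
  intros Hu Hv Hw. rewrite !phi3_cross. apply dot7_eq7; [intros k _; apply cross_eq7 | ]; assumption.
Qed.

Lemma gram3_eq7 u u' v v' w w' : eq7 u u' -> eq7 v v' -> eq7 w w' -> gram3 u v w = gram3 u' v' w'.
Proof.
  intros Hu Hv Hw. unfold gram3.
  rewrite (dot7_eq7 u u' u u'), (dot7_eq7 u u' v v'), (dot7_eq7 u u' w w'),
    (dot7_eq7 v v' v v'), (dot7_eq7 v v' w w'), (dot7_eq7 w w' w w') by assumption.
  reflexivity.
Qed.

Lemma phi3_eq_vol_cross_normal p v w mu : dot7 p p = 1 ->
  eq7 w (fun k => cross p v k + mu * p k) -> phi3 p v w = sqrt (gram3 p v w).
Proof.
  intros Hp Hw. set (c := cross p v) in *.
  assert (Hdw : forall a, dot7 a w = dot7 a c + mu * dot7 a p).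
  { intros a. rewrite (dot7_eq7 a a w (fun k => c k + mu * p k)) by easy.
    unfold dot7. ring. }
  assert (Hpc : dot7 p c = 0) by (rewrite dot7_comm; apply dot7_cross_l).
  assert (Hvc : dot7 v c = 0) by (rewrite dot7_comm; apply dot7_cross_r).
  assert (Hc : dot7 c c = dot7 v v - dot7 p v * dot7 p v)
    by (unfold c; rewrite dot7_cross_cross, Hp; ring).
  rewrite phi3_cross. fold c. unfold gram3.
  rewrite !Hdw, (dot7_comm w c), (dot7_comm w p), !Hdw, (dot7_comm c p), Hpc, Hvc, Hc, Hp.
  pose proof (dot7_ge0 c) as Hc0. rewrite Hc in Hc0.
  rewrite (dot7_comm v p).
  match goal with |- _ = sqrt ?g =>
    replace g with ((dot7 v v - dot7 p v * dot7 p v) * (dot7 v v - dot7 p v * dot7 p v)) by ring end.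
  rewrite sqrt_square by lra. ring.
Qed.

Lemma calibrated_frame_cross p e1 e2 :
  dot7 p p = 1 -> dot7 p e1 = 0 -> dot7 p e2 = 0 -> dot7 e1 e2 = 0 ->
  dot7 e1 e1 = dot7 e2 e2 -> phi3 p e1 e2 = sqrt (gram3 p e1 e2) -> eq7 e2 (cross p e1).
Proof.
  intros Hp H1 H2 H12 Hconf Hcal.
  unfold gram3 in Hcal. rewrite Hp, H1, H2, H12, <- Hconf, phi3_cross in Hcal.
  replace (1 * (dot7 e1 e1 * dot7 e1 e1 - 0 * 0) - 0 * (0 * dot7 e1 e1 - 0 * 0)
           + 0 * (0 * 0 - dot7 e1 e1 * 0)) with (dot7 e1 e1 * dot7 e1 e1) in Hcal by ring.
  rewrite sqrt_square in Hcal by apply dot7_ge0.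
  assert (Hc : dot7 (cross p e1) (cross p e1) = dot7 e1 e1)
    by (rewrite dot7_cross_cross, Hp, H1; ring).
  assert (Hdiff : dot7 (fun k => e2 k - cross p e1 k) (fun k => e2 k - cross p e1 k) = 0).
  { replace (dot7 _ _) with (dot7 e2 e2 - 2 * dot7 (cross p e1) e2 + dot7 (cross p e1) (cross p e1))
      by (unfold dot7; ring).
    rewrite Hcal, Hc, <- Hconf. ring. }
  intros k Hk. pose proof (dot7_self_eq0 _ Hdiff k Hk) as Hk0. simpl in Hk0. lra.
Qed.

Lemma is_derive_Rplus (f g : R -> R) x df dg : is_derive f x df -> is_derive g x dg ->
  is_derive (fun y : R => f y + g y) x (df + dg).
Proof. intros Hf Hg. exact (is_derive_plus f g x df dg Hf Hg). Qed.

Lemma is_derive_Rminus (f g : R -> R) x df dg : is_derive f x df -> is_derive g x dg ->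
  is_derive (fun y : R => f y - g y) x (df - dg).
Proof. intros Hf Hg. exact (is_derive_minus f g x df dg Hf Hg). Qed.

Lemma is_derive_Rmult (f g : R -> R) x df dg : is_derive f x df -> is_derive g x dg ->
  is_derive (fun y : R => f y * g y) x (df * g x + f x * dg).
Proof. intros Hf Hg. apply (is_derive_mult f g x df dg Hf Hg). intros; apply Rmult_comm. Qed.

Lemma is_derive_Rconst (c x : R) : is_derive (fun _ => c) x 0.
Proof. exact (is_derive_const c x). Qed.

Lemma is_derive_Rid (x : R) : is_derive (fun y => y) x 1.
Proof. exact (is_derive_id x). Qed.

Lemma is_derive_eq_value (f : R -> R) (x l l' : R) : is_derive f x l -> l = l' -> is_derive f x l'.
Proof. intros H <-. exact H. Qed.

Definition is_derive7 (f : R -> vec7) (x : R) (f' : vec7) : Prop :=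
  forall i, (i < 7)%nat -> is_derive (fun y => f y i) x (f' i).

Ltac is_derive_poly :=
  lazymatch goal with
  | |- is_derive (fun y => @?a y + @?b y) _ _ => apply is_derive_Rplus; is_derive_poly
  | |- is_derive (fun y => @?a y - @?b y) _ _ => apply is_derive_Rminus; is_derive_poly
  | |- is_derive (fun y => @?a y * @?b y) _ _ => apply is_derive_Rmult; is_derive_poly
  | |- is_derive (fun y => y) _ _ => apply is_derive_Rid
  | |- is_derive (fun _ => ?c) _ _ => apply is_derive_Rconst
  | |- is_derive (fun y => ?f y ?i) _ _ =>
      match goal with H : is_derive7 f _ _ |- _ => exact (H i ltac:(lia)) end
  | |- is_derive ?f _ _ => match goal with H : is_derive f _ _ |- _ => exact H end
  end.

Ltac solve_is_derive := eapply is_derive_eq_value; [is_derive_poly | cbv beta; ring].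

Lemma is_derive7_dot7 f g f' g' x : is_derive7 f x f' -> is_derive7 g x g' ->
  is_derive (fun y => dot7 (f y) (g y)) x (dot7 f' (g x) + dot7 (f x) g').
Proof. intros Hf Hg. unfold dot7. solve_is_derive. Qed.

Lemma is_derive7_cross f g f' g' x : is_derive7 f x f' -> is_derive7 g x g' ->
  is_derive7 (fun y => cross (f y) (g y)) x (fun k => cross f' (g x) k + cross (f x) g' k).
Proof. intros Hf Hg k Hk. coordinates k; try lia; simpl; solve_is_derive. Qed.

Lemma is_derive7_unique_loc f g f' g' x : locally x (fun y => eq7 (f y) (g y)) ->
  is_derive7 f x f' -> is_derive7 g x g' -> eq7 f' g'.
Proof.
  intros Hfg Hf Hg i Hi.
  rewrite <- (is_derive_unique _ _ _ (Hg i Hi)). symmetry. apply is_derive_unique.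
  apply (is_derive_ext_loc (fun y => f y i)); [| exact (Hf i Hi)].
  generalize Hfg. apply filter_imp. intros y Hy. exact (Hy i Hi).
Qed.

Lemma dot7_derive_unit_orth f f' x : locally x (fun y => dot7 (f y) (f y) = 1) ->
  is_derive7 f x f' -> dot7 (f x) f' = 0.
Proof.
  intros Hunit Hf.
  assert (Hconst : is_derive (fun y => dot7 (f y) (f y)) x 0).
  { apply (is_derive_ext_loc (fun _ => 1)); [| apply is_derive_Rconst].
    generalize Hunit. apply filter_imp. intros y Hy. now rewrite Hy. }
  pose proof (is_derive_unique _ _ _ (is_derive7_dot7 f f f' f' x Hf Hf)) as Hd.
  rewrite (is_derive_unique _ _ _ Hconst), dot7_comm in Hd. lra.
Qed.

Lemma open_locally_2d (U : C -> Prop) s t : open U -> U (s, t) -> locally_2d (fun x y => U (x, y)) s t.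
Proof.
  intros HU Hz. apply locally_2d_locally. generalize (HU _ Hz). apply filter_imp.
  intros [x y] H. exact H.
Qed.

Lemma open_locally_s (U : C -> Prop) s t : open U -> U (s, t) -> locally s (fun x => U (x, t)).
Proof. intros HU Hz. apply (locally_2d_1d_const_y (fun x y => U (x, y))), open_locally_2d; assumption. Qed.

Lemma open_locally_t (U : C -> Prop) s t : open U -> U (s, t) -> locally t (fun y => U (s, y)).
Proof. intros HU Hz. apply (locally_2d_1d_const_x (fun x y => U (x, y))), open_locally_2d; assumption. Qed.

Lemma smooth_on_is_derive_s U g l s t : smooth_on U g -> U (s, t) ->
  is_derive (fun x => dpart l g (x, t)) s (dpart (true :: l) g (s, t)).
Proof. intros Hg Hz. destruct (Hg l (s, t) Hz) as [H _]. exact (Derive_correct _ _ H). Qed.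

Lemma smooth_on_is_derive_t U g l s t : smooth_on U g -> U (s, t) ->
  is_derive (fun y => dpart l g (s, y)) t (dpart (false :: l) g (s, t)).
Proof. intros Hg Hz. destruct (Hg l (s, t) Hz) as [_ [H _]]. exact (Derive_correct _ _ H). Qed.

Lemma smooth_on_schwarz U g s t : open U -> smooth_on U g -> U (s, t) ->
  dpart (false :: true :: nil) g (s, t) = dpart (true :: false :: nil) g (s, t).
Proof.
  intros HU Hg Hz. symmetry. apply (Schwarz (fun x y => g (x, y)) s t).
  - apply locally_2d_impl with (P := fun x y => U (x, y)); [| apply open_locally_2d; assumption].
    apply locally_2d_forall. intros x y Hxy.
    destruct (Hg nil (x, y) Hxy) as [Hs [Ht _]].
    destruct (Hg (false :: nil) (x, y) Hxy) as [Hts _].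
    destruct (Hg (true :: nil) (x, y) Hxy) as [_ [Hst _]].
    repeat split; assumption.
  - apply continuity_2d_pt_filterlim. apply (Hg (true :: false :: nil) (s, t) Hz).
  - apply continuity_2d_pt_filterlim. apply (Hg (false :: true :: nil) (s, t) Hz).
Qed.

Lemma im_le_Cmod (c : C) : Rabs (Im c) <= Cmod c.
Proof. eapply Rle_trans; [apply Rmax_r | apply Rmax_Cmod]. Qed.

Lemma is_derive_holomorphic_along (f : C -> C) (z l v : C) (x0 : R) :
  Cmod v = 1 -> is_derive f z l ->
  is_derive (fun x => Re (f (z + RtoC (x - x0) * v)%C)) x0 (Re (v * l)%C) /\
  is_derive (fun x => Im (f (z + RtoC (x - x0) * v)%C)) x0 (Im (v * l)%C).
Proof.
  intros Hv [_ Hf].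
  assert (Hline : forall eps : posreal, locally x0 (fun x =>
    Cmod (f (z + RtoC (x - x0) * v) - f z - RtoC (x - x0) * v * l)%C <= eps * Rabs (x - x0))).
  { intros eps. destruct (Hf z (fun P HP => HP) eps) as [d Hd]. exists d. intros x Hx.
    assert (Hstep : Cminus (z + RtoC (x - x0) * v) z = (RtoC (x - x0) * v)%C)
      by (apply injective_projections; simpl; ring).
    assert (Hball : Cmod (Cminus (z + RtoC (x - x0) * v) z) < d)
      by (rewrite Hstep, Cmod_mult, Cmod_R, Hv, Rmult_1_r; exact Hx).
    specialize (Hd _ Hball).
    change (Cmod (Cminus (Cminus (f (z + RtoC (x - x0) * v)%C) (f z))
                   (Cmult (Cminus (z + RtoC (x - x0) * v) z) l))
       <= eps * Cmod (Cminus (z + RtoC (x - x0) * v) z)) in Hd.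
    rewrite Hstep, Cmod_mult, Cmod_R, Hv, Rmult_1_r in Hd. exact Hd. }
  assert (Hz : (z + RtoC (x0 - x0) * v)%C = z)
    by (apply injective_projections; simpl; ring).
  split; split; try apply is_linear_scal_l; intros x Hx;
    apply (is_filter_lim_locally_unique (V := R_NormedModule)) in Hx; subst x;
    intros eps; generalize (Hline eps); apply filter_imp; intros x Hx;
    rewrite Hz; (eapply Rle_trans; [| exact Hx]).
  - eapply Rle_trans; [| apply re_le_Cmod]. right.
    unfold norm, minus, plus, opp, scal, Re; simpl; unfold abs, mult; simpl. f_equal. ring.
  - eapply Rle_trans; [| apply im_le_Cmod]. right.
    unfold norm, minus, plus, opp, scal, Im; simpl; unfold abs, mult; simpl. f_equal. ring.
Qed.

Lemma holomorphic_partial_derivatives (w : C -> C) (z l : C) : is_derive w z l ->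
  is_derive (fun x => fst (w (x, snd z))) (fst z) (fst l) /\
  is_derive (fun x => snd (w (x, snd z))) (fst z) (snd l) /\
  is_derive (fun y => fst (w (fst z, y))) (snd z) (- snd l) /\
  is_derive (fun y => snd (w (fst z, y))) (snd z) (fst l).
Proof.
  intros Hw. destruct z as [s t]. simpl.
  destruct (is_derive_holomorphic_along w (s, t) l 1 s Cmod_1 Hw) as [Hs1 Hs2].
  destruct (is_derive_holomorphic_along w (s, t) l Ci t Cmod_Ci Hw) as [Ht1 Ht2].
  assert (Es : forall x, ((s, t) + RtoC (x - s) * 1)%C = (x, t))
    by (intros; apply injective_projections; simpl; ring).
  assert (Et : forall y, ((s, t) + RtoC (y - t) * Ci)%C = (s, y))
    by (intros; apply injective_projections; simpl; ring).
  split; [| split; [| split]].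
  - replace (fst l) with (Re (1 * l)%C) by (simpl; ring).
    eapply is_derive_ext; [| exact Hs1]. intros x. simpl. rewrite Es. reflexivity.
  - replace (snd l) with (Im (1 * l)%C) by (simpl; ring).
    eapply is_derive_ext; [| exact Hs2]. intros x. simpl. rewrite Es. reflexivity.
  - replace (- snd l) with (Re (Ci * l)%C) by (simpl; ring).
    eapply is_derive_ext; [| exact Ht1]. intros y. simpl. rewrite Et. reflexivity.
  - replace (fst l) with (Im (Ci * l)%C) by (simpl; ring).
    eapply is_derive_ext; [| exact Ht2]. intros y. simpl. rewrite Et. reflexivity.
Qed.

Lemma pd_r_ruled (phi psi : C -> vec7) r z i :
  pd_r (fun r z i => r * phi z i + psi z i) r z i = phi z i.
Proof. apply is_derive_unique. solve_is_derive. Qed.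

Lemma pd_r_cone (phi : C -> vec7) z i : pd_r (fun r z i => r * phi z i) 1 z i = phi z i.
Proof. apply is_derive_unique. solve_is_derive. Qed.

Lemma pd_s_cone (phi : C -> vec7) z i : pd_s (fun r z i => r * phi z i) 1 z i = d_s phi z i.
Proof. apply Derive_ext. intros x. ring. Qed.

Lemma pd_t_cone (phi : C -> vec7) z i : pd_t (fun r z i => r * phi z i) 1 z i = d_t phi z i.
Proof. apply Derive_ext. intros y. ring. Qed.

Section AssociativeCone.

Variables (U : C -> Prop) (phi : C -> vec7).
Hypothesis HU : open U.
Hypothesis Hsphere : forall z, U z -> norm7 (phi z) = 1.
Hypothesis Hsmooth : forall i, (i < 7)%nat -> smooth_on U (fun z => phi z i).

Lemma dot7_phi_phi z : U z -> dot7 (phi z) (phi z) = 1.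
Proof.
  intros Hz. rewrite <- (sqrt_sqrt (dot7 (phi z) (phi z))) by apply dot7_ge0.
  unfold norm7 in Hsphere. rewrite (Hsphere z Hz). ring.
Qed.

Section Derivatives.

Variables s t : R.
Hypothesis Hz : U (s, t).

Lemma is_derive7_phi_s : is_derive7 (fun x => phi (x, t)) s (d_s phi (s, t)).
Proof. intros i Hi. exact (smooth_on_is_derive_s _ _ nil s t (Hsmooth i Hi) Hz). Qed.

Lemma is_derive7_phi_t : is_derive7 (fun y => phi (s, y)) t (d_t phi (s, t)).
Proof. intros i Hi. exact (smooth_on_is_derive_t _ _ nil s t (Hsmooth i Hi) Hz). Qed.

Lemma is_derive7_d_s_phi_s : is_derive7 (fun x => d_s phi (x, t)) s (d_s (d_s phi) (s, t)).
Proof. intros i Hi. exact (smooth_on_is_derive_s _ _ (true :: nil) s t (Hsmooth i Hi) Hz). Qed.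

Lemma is_derive7_d_s_phi_t : is_derive7 (fun y => d_s phi (s, y)) t (d_t (d_s phi) (s, t)).
Proof. intros i Hi. exact (smooth_on_is_derive_t _ _ (true :: nil) s t (Hsmooth i Hi) Hz). Qed.

Lemma is_derive7_d_t_phi_s : is_derive7 (fun x => d_t phi (x, t)) s (d_s (d_t phi) (s, t)).
Proof. intros i Hi. exact (smooth_on_is_derive_s _ _ (false :: nil) s t (Hsmooth i Hi) Hz). Qed.

Lemma is_derive7_d_t_phi_t : is_derive7 (fun y => d_t phi (s, y)) t (d_t (d_t phi) (s, t)).
Proof. intros i Hi. exact (smooth_on_is_derive_t _ _ (false :: nil) s t (Hsmooth i Hi) Hz). Qed.

Lemma d_t_d_s_phi : eq7 (d_t (d_s phi) (s, t)) (d_s (d_t phi) (s, t)).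
Proof. intros i Hi. exact (smooth_on_schwarz _ _ s t HU (Hsmooth i Hi) Hz). Qed.

Lemma dot7_phi_d_s_phi : dot7 (phi (s, t)) (d_s phi (s, t)) = 0.
Proof.
  apply (dot7_derive_unit_orth (fun x => phi (x, t))); [| exact is_derive7_phi_s].
  generalize (open_locally_s U s t HU Hz). apply filter_imp. intros x. apply dot7_phi_phi.
Qed.

Lemma dot7_phi_d_t_phi : dot7 (phi (s, t)) (d_t phi (s, t)) = 0.
Proof.
  apply (dot7_derive_unit_orth (fun y => phi (s, y))); [| exact is_derive7_phi_t].
  generalize (open_locally_t U s t HU Hz). apply filter_imp. intros y. apply dot7_phi_phi.
Qed.

End Derivatives.

Hypothesis Hconf1 : forall z, U z -> dot7 (d_s phi z) (d_s phi z) = dot7 (d_t phi z) (d_t phi z).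
Hypothesis Hconf2 : forall z, U z -> dot7 (d_s phi z) (d_t phi z) = 0.
Hypothesis Hcone_imm : forall r z, U z -> r <> 0 -> immersion_at (fun r z i => r * phi z i) r z.
Hypothesis Hcone_assoc :
  associative_param (fun r z => U z /\ r <> 0) (fun r z i => r * phi z i).

Lemma d_t_phi_cross s t : U (s, t) -> eq7 (d_t phi (s, t)) (cross (phi (s, t)) (d_s phi (s, t))).
Proof.
  intros Hz.
  pose proof (Hcone_assoc 1 (s, t) (conj Hz R1_neq_R0) (Hcone_imm 1 (s, t) Hz R1_neq_R0)) as Hcal.
  rewrite (phi3_eq7 _ (phi (s, t)) _ (d_s phi (s, t)) _ (d_t phi (s, t))),
    (gram3_eq7 _ (phi (s, t)) _ (d_s phi (s, t)) _ (d_t phi (s, t))) in Hcal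
    by (intros i _; apply pd_r_cone || apply pd_s_cone || apply pd_t_cone).
  apply calibrated_frame_cross; auto using dot7_phi_phi, dot7_phi_d_s_phi, dot7_phi_d_t_phi.
Qed.

Variable w : C -> C.
Let F := fun r z i => r * phi z i + lie_deriv w phi z i.

Section SecondDerivatives.

Variables s t : R.
Hypothesis Hz : U (s, t).

Let p := phi (s, t).
Let e1 := d_s phi (s, t).

Lemma cross_phi_d_t_phi : eq7 (cross p (d_t phi (s, t))) (fun k => - e1 k).
Proof.
  intros k Hk. rewrite (cross_eq7 p p _ (cross p e1)) by (easy || apply d_t_phi_cross; auto).
  rewrite cross_cross_l by assumption. unfold p, e1.
  rewrite dot7_phi_d_s_phi, dot7_phi_phi by assumption. ring.
Qed.

Lemma d_s_d_t_phi : eq7 (d_s (d_t phi) (s, t)) (cross p (d_s (d_s phi) (s, t))).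
Proof.
  intros k Hk.
  assert (Hloc : locally s (fun x => eq7 (d_t phi (x, t)) (cross (phi (x, t)) (d_s phi (x, t)))))
    by (generalize (open_locally_s U s t HU Hz); apply filter_imp; intros x; apply d_t_phi_cross).
  rewrite (is_derive7_unique_loc _ _ _ _ s Hloc (is_derive7_d_t_phi_s s t Hz)
    (is_derive7_cross _ _ _ _ s (is_derive7_phi_s s t Hz) (is_derive7_d_s_phi_s s t Hz)) k Hk).
  cbv beta. rewrite cross_same. unfold p. ring.
Qed.

Lemma d_t_d_t_phi : eq7 (d_t (d_t phi) (s, t))
  (fun k => cross p (d_s (d_t phi) (s, t)) k - dot7 e1 e1 * p k).
Proof.
  intros k Hk.
  assert (Hloc : locally t (fun y => eq7 (d_t phi (s, y)) (cross (phi (s, y)) (d_s phi (s, y)))))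
    by (generalize (open_locally_t U s t HU Hz); apply filter_imp; intros y; apply d_t_phi_cross).
  rewrite (is_derive7_unique_loc _ _ _ _ t Hloc (is_derive7_d_t_phi_t s t Hz)
    (is_derive7_cross _ _ _ _ t (is_derive7_phi_t s t Hz) (is_derive7_d_s_phi_t s t Hz)) k Hk).
  rewrite (cross_eq7 _ (cross p e1) e1 e1) by (easy || apply d_t_phi_cross; auto).
  rewrite (cross_eq7 p p _ (d_s (d_t phi) (s, t))) by (easy || apply d_t_d_s_phi; auto).
  rewrite cross_cross_r by assumption. unfold p, e1. rewrite dot7_phi_d_s_phi by assumption. ring.
Qed.

Lemma pd_s_lie_ruled r l : is_derive w (s, t) l -> eq7 (pd_s F r (s, t))
  (fun i => (r + fst l) * e1 i + snd l * d_t phi (s, t) i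
            + fst (w (s, t)) * d_s (d_s phi) (s, t) i + snd (w (s, t)) * d_s (d_t phi) (s, t) i).
Proof.
  intros Hl i Hi. destruct (holomorphic_partial_derivatives w (s, t) l Hl) as [Ha [Hb _]].
  pose proof (is_derive7_phi_s s t Hz i Hi) as H0.
  pose proof (is_derive7_d_s_phi_s s t Hz i Hi) as H1.
  pose proof (is_derive7_d_t_phi_s s t Hz i Hi) as H2.
  apply is_derive_unique. unfold F, lie_deriv, e1. simpl in *. solve_is_derive.
Qed.

Lemma pd_t_lie_ruled r l : is_derive w (s, t) l -> eq7 (pd_t F r (s, t))
  (fun i => (r + fst l) * d_t phi (s, t) i - snd l * e1 i
            + fst (w (s, t)) * d_t (d_s phi) (s, t) i + snd (w (s, t)) * d_t (d_t phi) (s, t) i).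
Proof.
  intros Hl i Hi. destruct (holomorphic_partial_derivatives w (s, t) l Hl) as [_ [_ [Ha Hb]]].
  pose proof (is_derive7_phi_t s t Hz i Hi) as H0.
  pose proof (is_derive7_d_s_phi_t s t Hz i Hi) as H1.
  pose proof (is_derive7_d_t_phi_t s t Hz i Hi) as H2.
  apply is_derive_unique. unfold F, lie_deriv, e1. simpl in *. solve_is_derive.
Qed.

End SecondDerivatives.

Hypothesis Hw : holomorphic_on U w.

Lemma ruled_associative : associative_param (fun r z => U z) F.
Proof.
  intros r [s t] Hz _. destruct (Hw (s, t) Hz) as [l Hl].
  rewrite (phi3_eq7 _ (phi (s, t)) _ (pd_s F r (s, t)) _ (pd_t F r (s, t))),
    (gram3_eq7 _ (phi (s, t)) _ (pd_s F r (s, t)) _ (pd_t F r (s, t)))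
    by (intros i _; apply pd_r_ruled || easy).
  apply phi3_eq_vol_cross_normal
    with (mu := - snd (w (s, t)) * dot7 (d_s phi (s, t)) (d_s phi (s, t))).
  { apply dot7_phi_phi; assumption. }
  intros k Hk.
  rewrite (pd_t_lie_ruled s t Hz r l Hl k Hk),
    (cross_eq7 _ (phi (s, t)) _ _ k (fun _ _ => eq_refl) (pd_s_lie_ruled s t Hz r l Hl)).
  rewrite !cross_add_r, !cross_scale_r.
  rewrite <- (d_t_phi_cross s t Hz k Hk), (cross_phi_d_t_phi s t Hz k Hk),
    <- (d_s_d_t_phi s t Hz k Hk), (d_t_d_t_phi s t Hz k Hk), (d_t_d_s_phi s t Hz k Hk).
  ring.
Qed.

End AssociativeCone.

Theorem proposition6p8
  (U : C -> Prop) (phi : C -> vec7) (w : C -> C)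
  (HU : open U)
  (Hsphere : forall z, U z -> norm7 (phi z) = 1)
  (Hanalytic : forall i, (i < 7)%nat -> real_analytic_on U (fun z => phi z i))
  (Hsmooth : forall i, (i < 7)%nat -> smooth_on U (fun z => phi z i))
  (Hconf1 : forall z, U z -> dot7 (d_s phi z) (d_s phi z) = dot7 (d_t phi z) (d_t phi z))
  (Hconf2 : forall z, U z -> dot7 (d_s phi z) (d_t phi z) = 0)
  (Himm : forall z, U z -> dot7 (d_s phi z) (d_s phi z) > 0)
  (Horient : forall z, U z -> phi3 (phi z) (d_s phi z) (d_t phi z) > 0)
  (Hcone_imm : forall r z, U z -> r <> 0 -> immersion_at (fun r z i => r * phi z i) r z)
  (Hcone_assoc : associative_param (fun r z => U z /\ r <> 0) (fun r z i => r * phi z i))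
  (Hw : holomorphic_on U w) :
  let psi := lie_deriv w phi in
  associative_param (fun r z => U z) (fun r z i => r * phi z i + psi z i)
  /\ (forall x, asymptotic_cone U phi psi x <-> cone_set U phi x).
Proof.
  intros psi. split.
  - exact (ruled_associative U phi HU Hsphere Hsmooth Hconf1 Hconf2 Hcone_imm Hcone_assoc w Hw).
  - intros x. reflexivity.
Qed.
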